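(* Let $h,n\geq2$ and let $F$ be a social preference function. Then: (i) $G(F)$ is a subgroup of $G$; (ii) $G_1(F)$ and $G_2(F)$ are subgroups of $G(F)$, with $G_1(F)\leq S_h\times\{id\}$ and $G_2(F)\leq\{id\}\times S_n$; (iii) $\langle G_1(F),G_2(F)\rangle=G_1(F)\times G_2(F)\leq G(F)$, and there exist a pair $(h,n)$ and a social preference function $F$ for which this inclusion is strict; (iv) $G(F)=G_1(F)\times G_2(F)$ if and only if $G(F)=\pi_1(G(F))\times\pi_2(G(F))$, where $\pi_1,\pi_2$ are the projections of $G$ onto $S_h$ and $S_n$; (v) if $G(F)\leq S_h\times\{id\}$ then $G(F)=G_1(F)$, and if $G(F)\leq\{id\}\times S_n$ then $G(F)=G_2(F)$.
   Context: Permutations compose as $(\sigma\tau)(x)=\sigma(\tau(x))$. Let $G=S_h\times S_n$ and $\mathcal{P}=(S_n)^h$ (preference profiles), with $G$ acting by $(p^{(\varphi,\psi)})_i=\psi\,p_{\varphi^{-1}(i)}$. A social preference function is any $F:\mathcal{P}\to S_n$. Its symmetry group is $G(F)=\{(\varphi,\psi)\in G: F(p^{(\varphi,\psi)})=\psi F(p)\ \forall p\in\mathcal{P}\}$, its anonymity group is $G_1(F)=\{(\varphi,id)\in G: F(p^{(\varphi,id)})=F(p)\ \forall p\}$ and its neutrality group is $G_2(F)=\{(id,\psi)\in G: F(p^{(id,\psi)})=\psi F(p)\ \forall p\}$. *)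

From mathcomp Require Import all_boot all_fingroup.
Set Implicit Arguments. Unset Strict Implicit. Unset Printing Implicit Defensive.
Import GroupScope.

(* MathComp convention: for permutations s t, (s * t) x = t (s x).
   Hence the paper's composition psi o p (i.e. (psi p)(x) = psi (p x))
   is written (p * psi)%g here. *)

Definition profile (h n : nat) := {ffun 'I_h -> 'S_n}.

Definition spf (h n : nat) := profile h n -> 'S_n.

Definition pact (h n : nat) (p : profile h n) (g : 'S_h * 'S_n) : profile h n :=
  [ffun i => p (g.1^-1 i) * g.2].

Definition symG (h n : nat) (F : spf h n) : {set 'S_h * 'S_n} :=
  [set g | [forall p : profile h n, F (pact p g) == F p * g.2]].

Definition anonG (h n : nat) (F : spf h n) : {set 'S_h * 'S_n} :=
  [set g | (g.2 == 1) && [forall p : profile h n, F (pact p g) == F p]].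

Definition neutG (h n : nat) (F : spf h n) : {set 'S_h * 'S_n} :=
  [set g | (g.1 == 1) && [forall p : profile h n, F (pact p g) == F p * g.2]].

From mathcomp Require Import all_boot all_fingroup.
Import GroupScope.
Set Implicit Arguments. Unset Strict Implicit. Unset Printing Implicit Defensive.

(* G(F) is the stabiliser of F for the right action p |-> p^g.  G_1(F) and
   G_2(F) are the slices H :&: (S_h x 1) and H :&: (1 x S_n) of H = G(F), so
   (ii)-(v) are facts about an arbitrary subgroup H of a direct product: the
   two slices commute and meet trivially, so they generate their direct
   product, and (a, b) lies in it iff (a, 1) and (1, b) lie in H; when H
   contains the product of its projections this holds for all of H.
   For strictness take h = 3 and an involution t != 1: F p = p_2 t if
   (p_0, p_1) = (t, 1) and F p = p_2 otherwise is equivariant for swapping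
   agents 0, 1 while composing with t, since that maps the condition
   (p_0, p_1) = (t, 1) to itself, but not for the swap alone. *)

Section ProductSlices.
Variables gT1 gT2 : finGroupType.

Definition ker_snd (H : {set gT1 * gT2}) := H :&: setX [set: gT1] 1.
Definition ker_fst (H : {set gT1 * gT2}) := H :&: setX 1 [set: gT2].

Variable H : {group gT1 * gT2}.

Lemma group_set_ker_snd : group_set (ker_snd H).
Proof. exact: group_setI. Qed.

Lemma group_set_ker_fst : group_set (ker_fst H).
Proof. exact: group_setI. Qed.

Canonical ker_snd_group := Group group_set_ker_snd.
Canonical ker_fst_group := Group group_set_ker_fst.

Lemma ker_fst_cent : ker_fst H \subset 'C(ker_snd H).
Proof.
have [_ _ cXX _] := dprodP (setX_dprod [set: gT1] [set: gT2]).
exact: centSS (subsetIr _ _) (subsetIr _ _) cXX.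
Qed.

Lemma ker_snd_fst_TI : ker_snd H :&: ker_fst H = 1.
Proof.
have [_ _ _ tiXX] := dprodP (setX_dprod [set: gT1] [set: gT2]).
by apply/trivgP; rewrite -tiXX setISS ?subsetIr.
Qed.

Lemma ker_dprodE : ker_snd H \x ker_fst H = ker_snd H * ker_fst H.
Proof. exact: dprodE ker_fst_cent ker_snd_fst_TI. Qed.

Lemma ker_dprodEY : ker_snd H \x ker_fst H = <<ker_snd H :|: ker_fst H>>.
Proof. exact: dprodEY ker_fst_cent ker_snd_fst_TI. Qed.

Lemma mem_ker_mul x :
  (x \in ker_snd H * ker_fst H) = ((x.1, 1) \in H) && ((1, x.2) \in H).
Proof.
apply/mulsgP/andP => [[[a1 a2] [b1 b2]] | [Hx1 Hx2]].
  rewrite !inE /= andbT => /andP[Ha /eqP a2_1] /andP[Hb /eqP b1_1] ->.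
  by rewrite a2_1 b1_1 /= mulg1 mul1g in Ha Hb *.
exists (x.1, 1) (1, x.2); rewrite ?inE ?Hx1 ?Hx2 ?eqxx //.
by case: x {Hx1 Hx2} => x1 x2; congr (_, _); rewrite /= ?mulg1 ?mul1g.
Qed.

Lemma ker_dprod_sub : ker_snd H \x ker_fst H \subset H.
Proof. by rewrite ker_dprodE mul_subG ?subsetIl. Qed.

Lemma ker_dprod_eq_setX :
  H :=: ker_snd H \x ker_fst H <-> H :=: setX (fst @: H) (snd @: H).
Proof.
have oneH : (1 : gT1 * gT2) \in H := group1 H.
rewrite ker_dprodE; split => defH.
  apply/setP => x; apply/idP/idP => [Hx | ].
    by rewrite inE (imset_f fst Hx) (imset_f snd Hx).
  rewrite inE => /andP[/imsetP[y Hy x1E] /imsetP[z Hz x2E]].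
  rewrite defH mem_ker_mul x1E x2E /=.
  by rewrite defH !mem_ker_mul in Hy Hz; case/andP: Hy => -> _; case/andP: Hz.
apply/eqP; rewrite eqEsubset -ker_dprodE ker_dprod_sub andbT ker_dprodE.
apply/subsetP => x Hx; rewrite mem_ker_mul defH !inE /=.
by rewrite !imset_f // (imset_f fst oneH) (imset_f snd oneH).
Qed.

End ProductSlices.

Section SymmetryGroups.
Variables (h n : nat) (F : spf h n).

Lemma pact1 (p : profile h n) : pact p 1 = p.
Proof. by apply/ffunP => i; rewrite ffunE invg1 perm1 mulg1. Qed.

Lemma pactM (p : profile h n) g k : pact (pact p g) k = pact p (g * k).
Proof. by apply/ffunP => i; rewrite !ffunE /= invMg permM mulgA. Qed.

Lemma group_set_symG : group_set (symG F).
Proof.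
apply/group_setP; split => [|g k].
  by rewrite inE; apply/forallP => p; rewrite pact1 mulg1.
rewrite !inE => /forallP symg /forallP symk; apply/forallP => p.
by rewrite -pactM (eqP (symk _)) (eqP (symg _)) mulgA.
Qed.

Canonical symG_group := Group group_set_symG.

Lemma anonG_ker : anonG F = ker_snd (symG F).
Proof.
apply/setP => g; rewrite !inE andbC /=.
case: eqP => [-> | _]; rewrite ?andbF // !andbT.
by apply: eq_forallb => p; rewrite mulg1.
Qed.

Lemma neutG_ker : neutG F = ker_fst (symG F).
Proof. by apply/setP => g; rewrite !inE andbT andbC. Qed.

End SymmetryGroups.

Section SwapExample.
Variables (n : nat) (t : 'S_n).
Hypotheses (t_invol : t * t = 1) (t_neq1 : t != 1).

Let i0 : 'I_3 := ord0.
Let i1 : 'I_3 := @Ordinal 3 1 isT.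
Let i2 : 'I_3 := ord_max.

Definition swapF : spf 3 n :=
  fun p => if (p i0 == t) && (p i1 == 1) then p i2 * t else p i2.

Let swap01 := tperm i0 i1.

Lemma pact_swap01 (p : profile 3 n) s :
  [/\ pact p (swap01, s) i0 = p i1 * s, pact p (swap01, s) i1 = p i0 * s
    & pact p (swap01, s) i2 = p i2 * s].
Proof. by rewrite !ffunE /= tpermV tpermL tpermR tpermD. Qed.

Lemma swap_sym : (swap01, t) \in symG swapF.
Proof.
rewrite inE; apply/forallP => p; rewrite /swapF.
have [-> -> ->] := pact_swap01 p t.
have tV : t^-1 = t by rewrite -[LHS]mulg1 -t_invol mulKg.
rewrite -[X in p i1 * t == X]mul1g (inj_eq (mulIg t)).
rewrite -[in p i0 * t]tV -eq_mulgV1 andbC.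
by case: ifP; rewrite -?mulgA ?t_invol.
Qed.

Lemma swap_notin_symG : (swap01, 1) \notin symG swapF.
Proof.
rewrite inE negb_forall; apply/existsP.
exists [ffun i => if i == i0 then t else 1]; rewrite /swapF.
have [-> -> ->] := pact_swap01 [ffun i => if i == i0 then t else 1] 1.
by rewrite !ffunE !mulg1 /= !eqxx (negbTE t_neq1) andbF mul1g eq_sym.
Qed.

Lemma swapF_dprod_proper : anonG swapF \x neutG swapF \proper symG swapF.
Proof.
rewrite anonG_ker neutG_ker properE ker_dprod_sub /=.
apply: contra swap_notin_symG => /subsetP/(_ _ swap_sym).
by rewrite ker_dprodE mem_ker_mul => /andP[].
Qed.

End SwapExample.

Theorem mainTheorem13 :
  (forall (h n : nat) (F : spf h n), 2 <= h -> 2 <= n ->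
     (* (i) *)
     group_set (symG F)
     (* (ii) *)
  /\ (group_set (anonG F) /\ anonG F \subset symG F
      /\ group_set (neutG F) /\ neutG F \subset symG F
      /\ anonG F \subset setX [set: 'S_h] [1 'S_n]
      /\ neutG F \subset setX [1 'S_h] [set: 'S_n])
     (* (iii) first part *)
  /\ (<<anonG F :|: neutG F>> = anonG F \x neutG F
      /\ anonG F \x neutG F \subset symG F)
     (* (iv) *)
  /\ (symG F = anonG F \x neutG F <->
      symG F = setX (fst @: symG F) (snd @: symG F))
     (* (v) *)
  /\ (symG F \subset setX [set: 'S_h] [1 'S_n] -> symG F = anonG F)
  /\ (symG F \subset setX [1 'S_h] [set: 'S_n] -> symG F = neutG F))
  /\
  (* (iii) second part: the inclusion can be strict *)
  (exists (h n : nat) (F : spf h n), [/\ 2 <= h, 2 <= n &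
     anonG F \x neutG F \proper symG F]).
Proof.
split=> [h n F _ _ | ].
  rewrite anonG_ker neutG_ker -ker_dprodEY.
  split; first exact: group_set_symG.
  split.
    by do !split; rewrite ?group_set_ker_snd ?group_set_ker_fst ?subsetIl ?subsetIr.
  split; first by split; last exact: ker_dprod_sub.
  split; first exact: ker_dprod_eq_setX.
  by split; move/setIidPl.
pose t : 'S_2 := tperm ord0 ord_max.
have t_neq1 : t != 1 by apply/eqP => /permP/(_ ord0); rewrite tpermL perm1.
by exists 3, 2, (swapF t); split; rewrite // swapF_dprod_proper ?tperm2.
Qed.
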